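(* Let $G$ be an $\alpha_i$-metric graph ($i\ge 0$ an integer) and let $x,y$ be a pair of mutually distant vertices of $G$. Then $d(x,y)\ge 2rad(G)-4i-3$ and $d(x,y)\ge diam(G)-3i-2$. Furthermore, any middle vertex $z$ of a shortest path between $x$ and $y$ satisfies $e(z)\le\lceil d(x,y)/2\rceil+2i+1$.
   Context: All graphs are finite, connected, unweighted, undirected, simple; $d(u,v)$ is the shortest-path distance. $I(u,v)=\{x: d(u,x)+d(x,v)=d(u,v)\}$. A graph is $\alpha_i$-metric if for all vertices $u,v,w,x$: whenever $v\in I(u,w)$, $w\in I(v,x)$ and $v,w$ are adjacent, then $d(u,x)\ge d(u,v)+d(v,x)-i$. $e(v)=\max_u d(u,v)$, $rad(G)=\min_v e(v)$, $diam(G)=\max_v e(v)$. Vertices $x,y$ are mutually distant if $e(x)=e(y)=d(x,y)$. A middle vertex of a shortest $(x,y)$-path is a vertex $z$ on it with $\{d(x,z),d(y,z)\}=\{\lfloor d(x,y)/2\rfloor,\lceil d(x,y)/2\rceil\}$. *)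

From mathcomp Require Import all_boot.
Set Implicit Arguments. Unset Strict Implicit. Unset Printing Implicit Defensive.

Definition simple_graph (T : finType) (e : rel T) : Prop :=
  symmetric e /\ irreflexive e.

Definition walkn (T : finType) (e : rel T) (x y : T) (n : nat) : bool :=
  [exists p : n.-tuple T, path e x p && (last x p == y)].

Definition connected_graph (T : finType) (e : rel T) : Prop :=
  forall x y : T, exists p : seq T, path e x p /\ last x p = y.

(* shortest-path distance: least n (< #|T|) admitting a walk of length n;
   correct whenever the graph is connected *)
Definition dist (T : finType) (e : rel T) (x y : T) : nat :=
  find (walkn e x y) (iota 0 #|T|).

Definition in_interval (T : finType) (e : rel T) (u v x : T) : bool :=
  dist e u x + dist e x v == dist e u v.

Definition alpha_metric (T : finType) (e : rel T) (i : nat) : Prop :=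
  forall u v w x : T,
    in_interval e u w v -> in_interval e v x w -> e v w ->
    dist e u v + dist e v x <= dist e u x + i.

Definition ecc (T : finType) (e : rel T) (v : T) : nat :=
  \max_(u : T) dist e u v.

Definition diam (T : finType) (e : rel T) : nat :=
  \max_(v : T) ecc e v.

(* minimum of eccentricities; #|T| is an upper bound for every ecc,
   so it is a neutral starting value for a nonempty T *)
Definition rad (T : finType) (e : rel T) : nat :=
  \big[minn/#|T|]_(v : T) ecc e v.

Definition mutually_distant (T : finType) (e : rel T) (x y : T) : Prop :=
  ecc e x = dist e x y /\ ecc e y = dist e x y.

Definition shortest_path (T : finType) (e : rel T) (x y : T) (p : seq T) : Prop :=
  path e x p /\ last x p = y /\ size p = dist e x y.

Definition middle_vertex (T : finType) (e : rel T) (x y : T) (p : seq T) (z : T) : Prop :=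
  shortest_path e x y p /\ z \in x :: p /\
  ((dist e x z = (dist e x y)./2 /\ dist e y z = uphalf (dist e x y)) \/
   (dist e x z = uphalf (dist e x y) /\ dist e y z = (dist e x y)./2)).

(* Two facts about an alpha_i-metric graph carry the proof; both are about the
   slices {c in I(x,y) | d(x,c) = k} of an interval.
   (1) A slice has diameter at most i+1: two vertices of I(x,y) are compared
       with their neighbours one step closer to x, and the alpha_i condition
       rules out every way the distance could fail to shrink.
   (2) For c in I(x,y) and any vertex u, walk from c toward u.  As long as the
       walk stays in the slice of c nothing happens; at the first step leaving
       it, the walk moves away from x (or y) along an edge of a geodesic, and
       the alpha_i condition gives a slice vertex c' with
       d(c',u) + d(x,c) <= d(x,u) + i (or the same with y).
   When x and y are mutually distant, d(x,u) and d(y,u) are at most d(x,y), so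
   by (2) every vertex is within ceil(d(x,y)/2) + i of a middle slice, whose
   diameter is at most i+1 by (1). *)

From mathcomp Require Import all_boot zify.
Set Implicit Arguments. Unset Strict Implicit. Unset Printing Implicit Defensive.

Section Distance.

Variables (T : finType) (e : rel T).
Hypothesis e_conn : connected_graph e.

Local Notation d := (dist e).

Lemma walknP x y n :
  reflect (exists p : seq T, [/\ size p = n, path e x p & last x p = y])
          (walkn e x y n).
Proof.
apply: (iffP existsP) => [[p /andP[hp /eqP hl]] | [p [hs hp hl]]].
  by exists (val p); rewrite size_tuple.
have hs' : size p == n by apply/eqP.
by exists (Tuple hs'); rewrite /= hp hl eqxx.
Qed.

(* A loop-free walk visits at most #|T| vertices, so the search range of
   [dist] always contains a walk length. *)
Lemma has_walkn x y : has (walkn e x y) (iota 0 #|T|).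
Proof.
have [p [hp hl]] := e_conn x y.
case: (shortenP hp) hl => q hq uq _ hl.
apply/hasP; exists (size q); last by apply/walknP; exists q.
by rewrite mem_iota add0n; have := max_card (mem (x :: q)); rewrite (card_uniqP uq).
Qed.

Lemma dist_lt_card x y : d x y < #|T|.
Proof. by rewrite -[X in _ < X](size_iota 0 #|T|) -has_find has_walkn. Qed.

Lemma walkn_dist x y : walkn e x y (d x y).
Proof.
by have := nth_find 0 (has_walkn x y); rewrite nth_iota ?add0n ?dist_lt_card.
Qed.

Lemma dist_min x y n : walkn e x y n -> d x y <= n.
Proof.
move=> hw; case: (ltnP n #|T|) => hn; last first.
  by rewrite ltnW // (leq_trans (dist_lt_card x y)).
rewrite leqNgt; apply/negP => hlt.
by have := before_find 0 hlt; rewrite nth_iota // add0n hw.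
Qed.

Lemma dist_path x y :
  exists p : seq T, [/\ size p = d x y, path e x p & last x p = y].
Proof. exact/walknP/walkn_dist. Qed.

Lemma dist_le_size x y (p : seq T) : path e x p -> last x p = y -> d x y <= size p.
Proof. by move=> hp hl; apply/dist_min/walknP; exists p. Qed.

Lemma dist_eq0 x y : (d x y == 0) = (x == y).
Proof.
apply/eqP/eqP => [h | <-]; last by apply/eqP; rewrite -leqn0 (@dist_le_size _ _ [::]).
by have [[|z p] [hs _ hl]] := dist_path x y; rewrite h in hs.
Qed.

Lemma dist_xx x : d x x = 0.
Proof. by apply/eqP; rewrite dist_eq0. Qed.

Lemma dist_triangle x y z : d x z <= d x y + d y z.
Proof.
have [p [<- hp hl]] := dist_path x y; have [q [<- hq hl']] := dist_path y z.
by rewrite -size_cat dist_le_size // ?cat_path ?last_cat hl ?hp.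
Qed.

Lemma dist_adj_le x y : e x y -> d x y <= 1.
Proof. by move=> hxy; rewrite (@dist_le_size _ _ [:: y]) //= hxy. Qed.

Lemma dist_adj u v w : e v w -> d u w <= (d u v).+1.
Proof.
by move=> hvw; rewrite -addn1 (leq_trans (dist_triangle u v w)) ?leq_add2l ?dist_adj_le.
Qed.

Lemma dist_step x y n : d x y = n.+1 -> exists2 w, e x w & d w y = n.
Proof.
move=> hd; have [[|w p] [hs hp hl]] := dist_path x y; rewrite hd // in hs.
case/andP: hp => hxw hp; exists w => //.
have := dist_le_size hp hl; have := dist_triangle x w y; have := dist_adj_le hxw.
by case: hs; lia.
Qed.

Hypothesis e_sym : symmetric e.

Lemma dist_sym x y : d x y = d y x.
Proof.
have le_sym a b : d a b <= d b a.
  have [p [<- hp <-]] := dist_path b a.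
  rewrite -(size_belast b p) -size_rev dist_le_size //.
    by rewrite rev_path -(eq_path e_sym).
  case/lastP: p {hp} => [|p z] //=.
  by rewrite belast_rcons last_rcons rev_cons last_rcons.
by apply/eqP; rewrite eqn_leq !le_sym.
Qed.

Lemma dist_adj_sym u v w : e v w -> d u v <= (d u w).+1.
Proof. by rewrite e_sym; apply: dist_adj. Qed.

Lemma interval_level_exists x y k : k <= d x y ->
  exists2 z, in_interval e x y z & d x z = k.
Proof.
elim: k => [|k IH] hk; first by exists x; rewrite /in_interval dist_xx.
have [c /eqP cI hxc] := IH (ltnW hk).
have [w hcw hwy] : exists2 w, e c w & d w y = d x y - k.+1 by apply: dist_step; lia.
have := dist_adj x hcw; have := dist_triangle x w y => h1 h2.
by exists w; [apply/eqP|]; lia.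
Qed.

Lemma interval_middle_exists x y :
  exists2 z, in_interval e x y z & (d x y)./2 <= d x z <= uphalf (d x y).
Proof.
have [z zI hxz] : exists2 z, in_interval e x y z & d x z = (d x y)./2.
  by apply: interval_level_exists; lia.
by exists z; rewrite // hxz leqnn uphalf_half leq_addl.
Qed.

End Distance.

Lemma dist_le_ecc (T : finType) (e : rel T) u v : dist e u v <= ecc e v.
Proof. exact: (@leq_bigmax _ (dist e ^~ v)). Qed.

Lemma rad_le_ecc (T : finType) (e : rel T) v : rad e <= ecc e v.
Proof.
rewrite /rad; elim: (index_enum T) (mem_index_enum v) => // a r IH.
rewrite inE big_cons => /predU1P[<-|/IH]; first exact: geq_minl.
exact: leq_trans (geq_minr _ _).
Qed.


Section AlphaMetric.

Variables (T : finType) (e : rel T) (i : nat).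
Hypotheses (e_sym : symmetric e) (e_conn : connected_graph e).
Hypothesis e_alpha : alpha_metric e i.

Local Notation d := (dist e).
Local Notation d_sym := (dist_sym e_conn e_sym).

(* [d v w = 1] follows from the distance conditions. *)
Lemma alpha_edge u v w x : e v w ->
  d u w = (d u v).+1 -> d v x = (d w x).+1 -> d u v + d v x <= d u x + i.
Proof.
move=> hvw huw hvx.
have dvw : d v w = 1.
  by have := dist_adj_le e_conn hvw; have := dist_triangle e_conn u v w; lia.
by apply: e_alpha hvw; apply/eqP; lia.
Qed.

Lemma interval_step_toward x y c n : in_interval e x y c -> d x c = n.+1 ->
  exists c', [/\ e c c', d x c' = n & d c' y = (d c y).+1].
Proof.
move=> /eqP cI hxc.
have [c' hcc' hc'x] : exists2 c', e c c' & d c' x = n.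
  by apply: (dist_step e_conn); rewrite d_sym.
rewrite d_sym in hc'x; exists c'; split => //.
have := dist_adj e_conn y hcc'; have := dist_triangle e_conn x c' y.
by rewrite (d_sym y c') (d_sym y c); lia.
Qed.

Lemma interval_level_shift x y c u : in_interval e x y c ->
  exists c', [/\ d x c' = d x c, d c' y = d c y &
    d x c' + d c' u <= d x u + i \/ d y c' + d c' u <= d y u + i].
Proof.
move=> /eqP cI; move hn : (d c u) => n.
elim: n c cI hn => [|n IH] c cI hcu.
  exists c; split => //; left.
  have -> : c = u by apply/eqP; rewrite -(dist_eq0 e_conn) hcu.
  by rewrite (dist_xx e_conn) addn0 leq_addr.
have [w hcw hwu] := dist_step e_conn hcu.
have [xw | wx] := ltnP (d x c) (d x w).
  exists c; split => //; left; apply: (alpha_edge hcw); last by rewrite hcu hwu.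
  by have := dist_adj e_conn x hcw; lia.
have [yw | wy] := ltnP (d y c) (d y w).
  exists c; split => //; right; apply: (alpha_edge hcw); last by rewrite hcu hwu.
  by have := dist_adj e_conn y hcw; lia.
have [hxw hwy] : d x w = d x c /\ d w y = d c y.
  have := dist_triangle e_conn x w y.
  by rewrite (d_sym y c) (d_sym y w) in wy *; lia.
have [c' [hxc' hc'y near]] := IH w ltac:(lia) hwu.
by exists c'; split => //; lia.
Qed.

Lemma interval_level_dist x y z c :
  in_interval e x y z -> in_interval e x y c -> d x z <= d x c ->
  d z c <= d x c - d x z + i + 1.
Proof.
move hn : (d x z) => n; elim: n z c hn => [|n IH] z c hxz zI cI hle.
  by move/eqP: hxz; rewrite (dist_eq0 e_conn) => /eqP <-; rewrite subn0 -addnA leq_addr.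
rewrite leqNgt; apply/negP => far.
have hxc : d x c = (d x c).-1.+1 by lia.
have [z' [zz' hxz' hz'y]] := interval_step_toward zI hxz.
have [c' [cc' hxc' hc'y]] := interval_step_toward cI hxc.
have near : d z' c' <= d x c' - n + i + 1.
  by apply: IH => //; apply/eqP; move/eqP: zI; move/eqP: cI; lia.
move: zI cI => /eqP zI /eqP cI.
rewrite (d_sym z c) in far.
have := dist_adj e_conn c zz'; have := dist_adj_sym e_conn e_sym c zz'.
have := dist_adj_sym e_conn e_sym z' cc'; rewrite (d_sym z' c).
(* Whenever [d c z'] or [d z' c'] fails to drop below [d c z], the alpha_i
   condition applies along a geodesic through the edge [z z'] or [c c']. *)
have [lt|gt|eq] := ltngtP (d c z) (d c z') => h1 h2 h3.
- have hcz' : d c z' = (d c z).+1 by lia.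
  have hzx : d z x = (d z' x).+1 by rewrite (d_sym z x) (d_sym z' x) hxz hxz'.
  by have := alpha_edge zz' hcz' hzx; rewrite (d_sym c x); lia.
- have hcz : d c z = (d c z').+1 by lia.
  have z'z : e z' z by rewrite e_sym.
  by have := alpha_edge z'z hcz hz'y; lia.
have [lt'|ge'] := ltnP (d z' c') (d c z').
- have hz'c : d z' c = (d z' c').+1 by rewrite (d_sym z' c); lia.
  have c'c : e c' c by rewrite e_sym.
  by have := alpha_edge c'c hz'c hc'y; lia.
- lia.
Qed.

Section MutuallyDistant.

Variables x y : T.
Hypothesis xy_distant : mutually_distant e x y.

Local Notation D := (d x y).

Lemma middle_level_near z u : in_interval e x y z -> D./2 <= d x z <= uphalf D ->
  exists c, [/\ in_interval e x y c, d x c = d x z & d c u <= uphalf D + i].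
Proof.
move=> zI /andP[lo hi]; have [c [hxc hcy near]] := interval_level_shift u zI.
have := dist_le_ecc e u x; have := dist_le_ecc e u y.
case: xy_distant => -> ->; rewrite (d_sym u x) (d_sym u y) => huy hux.
move/eqP: zI => zI; rewrite (d_sym y c) in near.
by exists c; split; [apply/eqP | |]; lia.
Qed.

Lemma ecc_middle_level z : in_interval e x y z -> D./2 <= d x z <= uphalf D ->
  ecc e z <= uphalf D + 2 * i + 1.
Proof.
move=> zI zmid; apply/bigmax_leqP => u _.
have [c [cI hxc near]] := middle_level_near u zI zmid.
have := interval_level_dist cI zI (eq_leq hxc).
have := dist_triangle e_conn u c z; rewrite (d_sym u c); lia.
Qed.

Lemma two_rad_le : 2 * rad e <= D + 4 * i + 3.
Proof.
have [z zI zmid] := interval_middle_exists e_conn x y.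
have := ecc_middle_level zI zmid; have := rad_le_ecc e z; lia.
Qed.

Lemma dist_le_mutually_distant u v : d u v <= D + 3 * i + 2.
Proof.
have [z zI zmid] := interval_middle_exists e_conn x y.
have [cu [cuI hcu near_u]] := middle_level_near u zI zmid.
have [cv [cvI hcv near_v]] := middle_level_near v zI zmid.
have hcuv : d x cu <= d x cv by rewrite hcu hcv.
have := interval_level_dist cuI cvI hcuv.
have := dist_triangle e_conn u cu v; have := dist_triangle e_conn cu cv v.
rewrite (d_sym u cu); lia.
Qed.

End MutuallyDistant.

End AlphaMetric.

Theorem lemma6 (T : finType) (e : rel T) (i : nat) (x y : T) :
  simple_graph e -> connected_graph e -> alpha_metric e i ->
  mutually_distant e x y ->
  [/\ 2 * rad e <= dist e x y + 4 * i + 3,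
      diam e <= dist e x y + 3 * i + 2 &
      forall (p : seq T) (z : T), middle_vertex e x y p z ->
        ecc e z <= uphalf (dist e x y) + 2 * i + 1].
Proof.
move=> [e_sym _] e_conn e_alpha xy_distant; split.
- exact: (two_rad_le e_sym e_conn e_alpha xy_distant).
- apply/bigmax_leqP => v _; apply/bigmax_leqP => u _.
  exact: (dist_le_mutually_distant e_sym e_conn e_alpha xy_distant).
- move=> p z [_ [_ zmid]]; have := dist_sym e_conn e_sym y z => hzy.
  apply: (ecc_middle_level e_sym e_conn e_alpha xy_distant).
    by apply/eqP; lia.
  by apply/andP; lia.
Qed.
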